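(* Let $f:[0,1]\to[0,1]$ be a continuous function that does not admit a splitting sequence. If $0\le d<e\le 1$ and either $d$ and $e$ are both fixed points of $f$ or $\{d,e\}$ is a 2-cycle of $f$, then there is exactly one component $C$ of $f^{-1}((d,e))$ such that $f(C)=(d,e)$.
   Context: A 2-cycle is a set $\{s,t\}$ with $s\ne t$, $f(s)=t$, $f(t)=s$. A sequence $(T_n)_{n\in\mathbb N}$ of closed intervals $T_n\subsetneq[0,1]$ (possibly degenerate) is tight if $f(T_{n+1})=T_n$ for every $n$ and $T_n$ is nondegenerate for all sufficiently large $n$. A tight sequence $(T_n)$, $T_n=[l_n,r_n]$, is a splitting sequence admitted by $f$ if there are an infinite set $N\subseteq\mathbb N$ and nondegenerate closed intervals $S_n\subseteq[0,1]$ ($n\in N$) with $S_n\cap T_n\subseteq\{l_n,r_n\}$ and $f(S_n)=f(T_n)$ for all $n\in N$. *)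

From HB Require Import structures.
From mathcomp Require Import all_boot all_order all_algebra.
From mathcomp Require Import all_classical all_reals all_analysis.
Set Implicit Arguments. Unset Strict Implicit. Unset Printing Implicit Defensive.
Import Order.TTheory GRing.Theory Num.Theory.
Import numFieldTopology.Exports numFieldNormedType.Exports.
Local Open Scope classical_set_scope.
Local Open Scope ring_scope.

(* A closed interval [l,r] is encoded by the pair (l, r); "closed interval
   contained in [0,1], possibly degenerate" means 0 <= l <= r <= 1. *)

Definition tight {R : realType} (f : R -> R) (T : nat -> R * R) : Prop :=
  (forall n, 0 <= (T n).1 /\ (T n).1 <= (T n).2 /\ (T n).2 <= 1 /\
             `[(T n).1, (T n).2]%classic <> `[0, 1]%classic :> set R) /\
  (forall n, f @` `[(T n.+1).1, (T n.+1).2]%classic = `[(T n).1, (T n).2]%classic) /\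
  (exists m, forall n, (m <= n)%N -> (T n).1 < (T n).2).

Definition splitting_sequence {R : realType} (f : R -> R) (T : nat -> R * R)
  : Prop :=
  tight f T /\
  exists N : set nat, ~ finite_set N /\
  exists S : nat -> R * R, forall n, N n ->
    [/\ 0 <= (S n).1, (S n).1 < (S n).2, (S n).2 <= 1,
        `[(S n).1, (S n).2]%classic `&` `[(T n).1, (T n).2]%classic `<=` [set (T n).1; (T n).2]
      & f @` `[(S n).1, (S n).2]%classic = f @` `[(T n).1, (T n).2]%classic].

Definition admits_splitting_sequence {R : realType} (f : R -> R) : Prop :=
  exists T, splitting_sequence f T.

From HB Require Import structures.
From mathcomp Require Import all_boot all_order all_algebra.
From mathcomp Require Import all_classical all_reals all_analysis.
From mathcomp Require Import lra.
Import Order.TTheory GRing.Theory Num.Theory Num.Def.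
Import numFieldTopology.Exports numFieldNormedType.Exports.
Local Open Scope classical_set_scope.
Local Open Scope ring_scope.

(* If f p = l < r = f q, then between the last visit to l and the next visit to
   r there is an interval [a, b] that f maps onto [l, r], with ]a, b[ mapped
   onto ]l, r[.  Applied to preimages of d and e this gives a component of
   f^-1(]d, e[) mapped onto ]d, e[.  Applied inside ]d, e[ it pulls every
   [l, r] in ]d, e[ back to some [a, b] in ]d, e[, and iterating yields a tight
   sequence (T_n) in ]d, e[.  If two distinct components C1, C2 were mapped onto
   ]d, e[, each connected T_n would miss one of them, and pulling f(T_n) back
   into that component would give intervals S_n disjoint from T_n with
   f(S_n) = f(T_n): a splitting sequence. *)

Section ItvPullback.
Context {R : realType}.
Implicit Types (f : R -> R) (A : set R) (a b l p q r : R).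

Lemma continuous_subitv {f a b a' b'} : a <= a' -> b' <= b ->
  {within `[a, b]%classic, continuous f} -> {within `[a', b']%classic, continuous f}.
Proof.
by move=> aa' b'b; apply: continuous_subspaceW; apply: subset_itvScc; rewrite bnd_simp.
Qed.

Lemma closed_inf_mem {A} : A !=set0 -> has_lbound A -> closed A -> A (inf A).
Proof.
move=> A0 lbA cA; apply: (itv_closed_infimums A0 cA); split; first exact: ge_inf.
by move=> x; apply: lb_le_inf.
Qed.

Lemma closed_sup_mem {A} : A !=set0 -> has_ubound A -> closed A -> A (sup A).
Proof.
move=> A0 ubA cA; apply: (itv_closed_supremums A0 cA); split.
  exact: sup_upper_bound.
by move=> x; apply: ge_sup.
Qed.

Section Hits.
Context {f : R -> R} {a b r : R}.
Hypotheses (f_cont : {within `[a, b]%classic, continuous f})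
  (hit : exists2 x, `[a, b]%classic x & f x = r).

Let hits := [set x | `[a, b]%classic x /\ f x = r].
Let hits0 : hits !=set0. Proof. by case: hit => x; exists x. Qed.

Let closed_hits : closed hits.
Proof.
move: f_cont => /continuous_closedP/(_ _ (@closed_eq _ r))/closed_subspaceP[V cV VE].
rewrite (_ : hits = V `&` `[a, b]%classic); first exact: (closedI cV (@itv_closed _ R a b)).
by rewrite VE; apply/seteqP; split => x /= [].
Qed.

Lemma first_hit :
  exists c, [/\ a <= c <= b, f c = r & forall x, a <= x < c -> f x != r].
Proof.
have lb : has_lbound hits by exists a => x [/=]; rewrite in_itv => /andP[].
have [/=] := closed_inf_mem hits0 lb closed_hits.
rewrite in_itv /= => /andP[ac cb] fc.
exists (inf hits); rewrite ac cb; split => // x /andP[ax xc]; apply/eqP => fx.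
have : hits x by split; rewrite //= in_itv /= ax (le_trans (ltW xc) cb).
by move/(ge_inf lb); rewrite leNgt xc.
Qed.

Lemma last_hit :
  exists c, [/\ a <= c <= b, f c = r & forall x, c < x <= b -> f x != r].
Proof.
have ub : has_ubound hits by exists b => x [/=]; rewrite in_itv => /andP[].
have [/=] := closed_sup_mem hits0 ub closed_hits.
rewrite in_itv /= => /andP[ac cb] fc.
exists (sup hits); rewrite ac cb; split => // x /andP[cx xb]; apply/eqP => fx.
have : hits x by split; rewrite //= in_itv /= xb (le_trans ac (ltW cx)).
by move/(sup_upper_bound (conj hits0 ub)); rewrite leNgt cx.
Qed.

End Hits.

Lemma strictly_between_hits {f p q l r} : p < q -> l < r ->
  {within `[p, q]%classic, continuous f} -> f p = l -> f q = r ->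
  exists a b, [/\ p <= a, a < b, b <= q, f a = l /\ f b = r &
    forall x, a < x < b -> l < f x < r].
Proof.
move=> pq lr f_cont fp fq.
have [a [/andP[pa aq] fa a_last]] : exists a,
    [/\ p <= a <= q, f a = l & forall x, a < x <= q -> f x != l].
  by apply: last_hit f_cont _; exists p; rewrite //= bound_itvE ltW.
have aq' : a < q.
  by rewrite lt_neqAle aq andbT; apply/eqP => aqE; move: fa; rewrite aqE fq; lra.
have f_cont_aq := continuous_subitv pa (lexx q) f_cont.
have [b [/andP[ab bq] fb b_first]] : exists b,
    [/\ a <= b <= q, f b = r & forall x, a <= x < b -> f x != r].
  by apply: first_hit f_cont_aq _; exists q; rewrite //= bound_itvE ltW.
have ab' : a < b.
  by rewrite lt_neqAle ab andbT; apply/eqP => abE; move: fa; rewrite abE fb; lra.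
exists a, b; split => // x /andP[ax xb].
have fxl : f x != l by apply: a_last; rewrite ax (le_trans (ltW xb) bq).
have fxr : f x != r by apply: b_first; rewrite (ltW ax) xb.
rewrite !lt_neqAle eq_sym fxl fxr /= !leNgt; apply/andP; split; apply/negP => fx_out.
- have [|c /[!in_itv]/= /andP[xc cb] fcl] :=
    IVT (ltW xb) (continuous_subitv (ltW ax) bq f_cont_aq) (v := l).
    by rewrite fb ge_min le_max (ltW fx_out) (ltW lr) orbT.
  by move: (a_last c); rewrite fcl eqxx (lt_le_trans ax xc) (le_trans cb bq) => /(_ isT).
- have [|c /[!in_itv]/= /andP[ac cx] fcr] :=
    IVT (ltW ax) (continuous_subitv (lexx a) (le_trans (ltW xb) bq) f_cont_aq) (v := r).
    by rewrite fa ge_min le_max (ltW lr) (ltW fx_out) orbT.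
  by move: (b_first c); rewrite fcr eqxx ac (le_lt_trans cx xb) => /(_ isT).
Qed.

Lemma strictly_between_hits_minmax {f p q l r} : l < r ->
  {within `[minr p q, maxr p q]%classic, continuous f} -> f p = l -> f q = r ->
  exists a b, [/\ minr p q <= a, a < b, b <= maxr p q,
    (f a = l /\ f b = r) \/ (f a = r /\ f b = l) &
    forall x, a < x < b -> l < f x < r].
Proof.
move=> lr + fp fq; case: (ltgtP p q) => [pq|qp|pq] f_cont;
  last by move: fp fq lr; rewrite pq => -> ->; lra.
- have [a [b [pa ab bq fab mid]]] := strictly_between_hits pq lr f_cont fp fq.
  by exists a, b; split; auto.
- have Nf_cont : {within `[q, p]%classic, continuous (fun x => - f x)}.
    by move=> x; apply: continuousN; apply: f_cont.
  have Nlr : - r < - l by rewrite ltrN2.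
  have [a [b [qa ab bp [fa fb] mid]]] :=
    strictly_between_hits qp Nlr Nf_cont (congr1 -%R fq) (congr1 -%R fp).
  exists a, b; split => //; first by right; split; apply: oppr_inj.
  by move=> x /mid /andP[? ?]; apply/andP; split; lra.
Qed.

Lemma itv_image_between {f a b l r} : {within `[a, b]%classic, continuous f} ->
  a < b -> l < r -> (f a = l /\ f b = r) \/ (f a = r /\ f b = l) ->
  (forall x, a < x < b -> l < f x < r) ->
  f @` `[a, b]%classic = `[l, r]%classic /\ f @` `]a, b[%classic = `]l, r[%classic.
Proof.
move=> f_cont ab lr ends mid.
have ivt y : l <= y <= r -> exists2 c, a <= c <= b & f c = y.
  move=> /andP[ly yr]; have [|c] := IVT (ltW ab) f_cont (v := y).
    by case: ends => -[-> ->]; rewrite ge_min le_max ly yr ?orbT.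
  by rewrite in_itv /=; exists c.
split; apply/seteqP; split.
- move=> y [x]; rewrite /= !in_itv /= => /andP[ax xb] <-.
  have [<-|ax'] := eqVneq a x; first by case: ends => -[-> _]; rewrite lexx ltW.
  have [->|xb'] := eqVneq x b; first by case: ends => -[_ ->]; rewrite lexx ltW.
  have /andP[lfx fxr] : l < f x < r by apply: mid; rewrite !lt_neqAle ax ax' xb xb'.
  by rewrite !ltW.
- move=> y; rewrite /= in_itv /= => /ivt[c cab fcy].
  by exists c; rewrite //= in_itv.
- by move=> y [x]; rewrite /= !in_itv /= => /mid ? <-.
- move=> y; rewrite /= in_itv /= => /andP[ly yr].
  have [c /andP[ac cb] fcy] : exists2 c, a <= c <= b & f c = y by apply: ivt; rewrite !ltW.
  have [fa_y fb_y] : f a != y /\ f b != y.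
    by case: ends => -[-> ->]; rewrite (lt_eqF ly) (gt_eqF yr).
  exists c => //; rewrite /= in_itv /= !lt_neqAle ac cb !andbT.
  apply/andP; split; [apply: contraNneq fa_y => ->|apply: contraNneq fb_y => <-];
  by rewrite fcy.
Qed.

Lemma exists_itv_onto {f p q l r} : l < r ->
  {within `[minr p q, maxr p q]%classic, continuous f} -> f p = l -> f q = r ->
  exists a b, [/\ minr p q <= a, a < b, b <= maxr p q,
    f @` `[a, b]%classic = `[l, r]%classic & f @` `]a, b[%classic = `]l, r[%classic].
Proof.
move=> lr f_cont fp fq.
have [a [b [pqa ab bpq ends mid]]] := strictly_between_hits_minmax lr f_cont fp fq.
have [fab fab_open] := itv_image_between (continuous_subitv pqa bpq f_cont) ab lr ends mid.
by exists a, b.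
Qed.

End ItvPullback.

Lemma dependent_choice {T : Type} (P : T -> Prop) (Q : T -> T -> Prop) x0 :
  P x0 -> (forall x, P x -> exists2 y, P y & Q x y) ->
  exists2 u : nat -> T, forall n, P (u n) & forall n, Q (u n) (u n.+1).
Proof.
move=> Px0 step; have /choice[g hg] : forall x, exists y, P x -> P y /\ Q x y.
  move=> x; have [Px|nPx] := pselect (P x); last by exists x.
  by have [y Py Qxy] := step x Px; exists y.
have Pu n : P (iter n g x0) by elim: n => //= n /hg[].
by exists (fun n => iter n g x0) => // n; have [] := hg _ (Pu n).
Qed.

Lemma connected_avoids_component {T : topologicalType} {A K : set T} {x1 x2 : T} :
  connected K -> K `<=` A ->
  connected_component A x1 <> connected_component A x2 ->
  K `&` connected_component A x1 = set0 \/ K `&` connected_component A x2 = set0.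
Proof.
move=> Kc KA C12.
have [[z1 [Kz1 C1z1]]|K1] := pselect (K `&` connected_component A x1 !=set0);
  last by left; rewrite -subset0 => z Kz; apply: K1; exists z.
right; rewrite -subset0 => z [Kz C2z]; apply: C12.
have KC1 : K `<=` connected_component A x1.
  by rewrite (same_connected_component C1z1); exact: connected_component_max.
by rewrite (same_connected_component (KC1 z Kz)) (same_connected_component C2z).
Qed.

Section OntoComponents.
Context {R : realType} {f : R -> R} {d e : R}.
Hypotheses (f_cont : {within `[0, 1]%classic, continuous f})
  (d0 : 0 <= d) (de : d < e) (e1 : e <= 1)
  (hde : (f d = d /\ f e = e) \/ (f d = e /\ f e = d)).

Let U := `[0, 1]%classic `&` f @^-1` `]d, e[%classic.
Let inner (J : R * R) := [/\ d < J.1, J.1 < J.2 & J.2 < e].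

Lemma mem01_of_de x : d <= x <= e -> `[0, 1]%classic x.
Proof. by move=> /andP[dx xe]; rewrite /= in_itv /= (le_trans d0 dx) (le_trans xe e1). Qed.

Lemma continuous_minmax p q : `[0, 1]%classic p -> `[0, 1]%classic q ->
  {within `[minr p q, maxr p q]%classic, continuous f}.
Proof.
rewrite /= !in_itv /= => /andP[p0 p1] /andP[q0 q1].
by apply: continuous_subitv f_cont; rewrite ?le_min ?ge_max ?p0 ?q0 ?p1 ?q1.
Qed.

Lemma preimage_in_de y : d <= y <= e -> exists2 x, d <= x <= e & f x = y.
Proof.
move=> /andP[dy ye]; have [|x] := IVT (ltW de) (continuous_subitv d0 e1 f_cont) (v := y).
  by case: hde => -[-> ->]; rewrite ge_min le_max dy ye ?orbT.
by rewrite in_itv /=; exists x.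
Qed.

(* [d] and [e] are mapped to [d] or [e], never into ]d, e[. *)
Lemma inner_of_inner_value x : d <= x <= e -> d < f x < e -> d < x < e.
Proof.
move=> /andP[dx xe] /andP[dfx fxe]; rewrite !lt_neqAle dx xe !andbT.
apply/andP; split; apply/eqP => xE; [rewrite -xE in dfx fxe|rewrite xE in dfx fxe];
  by case: hde => -[fd fe]; lra.
Qed.

Lemma minmax_in_de p q :
  d <= p <= e -> d <= q <= e -> d <= minr p q /\ maxr p q <= e.
Proof. by move=> /andP[dp pe] /andP[dq qe]; rewrite le_min ge_max dp dq pe qe. Qed.

Lemma onto_component_exists :
  exists2 x, U x & f @` connected_component U x = `]d, e[%classic.
Proof.
have [p pde fp] : exists2 p, d <= p <= e & f p = d.
  by apply: preimage_in_de; rewrite lexx ltW.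
have [q qde fq] : exists2 q, d <= q <= e & f q = e.
  by apply: preimage_in_de; rewrite lexx ltW.
have [a [b [pqa ab bpq _ fab]]] :=
  exists_itv_onto de (continuous_minmax _ _ (mem01_of_de _ pde) (mem01_of_de _ qde)) fp fq.
have [dpq pqe] := minmax_in_de _ _ pde qde.
have abU : `]a, b[%classic `<=` U.
  move=> x abx; have := abx; rewrite /= in_itv /= => /andP[ax xb]; split.
    apply: mem01_of_de.
    by rewrite (le_trans dpq (le_trans pqa (ltW ax))) (le_trans (ltW xb) (le_trans bpq pqe)).
  suff : (f @` `]a, b[%classic) (f x) by rewrite fab.
  by exists x.
have mab : `]a, b[%classic ((a + b) / 2) by rewrite /= in_itv /=; apply/andP; split; lra.
exists ((a + b) / 2); first exact: abU.
apply/seteqP; split; first by move=> y [x /connected_component_sub[_ ?] <-].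
rewrite -[X in X `<=` _]fab; apply: image_subset.
apply: connected_component_max mab abU _.
exact/connected_intervalP/interval_is_interval.
Qed.

Lemma pullback_inner J : inner J ->
  exists2 J', inner J' & f @` `[J'.1, J'.2]%classic = `[J.1, J.2]%classic.
Proof.
case: J => l r [/= dl lr re].
have [p pde fp] : exists2 p, d <= p <= e & f p = l.
  by apply: preimage_in_de; rewrite !ltW // (lt_trans lr re).
have [q qde fq] : exists2 q, d <= q <= e & f q = r.
  by apply: preimage_in_de; rewrite !ltW // (lt_trans dl lr).
have [a [b [pqa ab bpq fab _]]] :=
  exists_itv_onto lr (continuous_minmax _ _ (mem01_of_de _ pde) (mem01_of_de _ qde)) fp fq.
have [dpq pqe] := minmax_in_de _ _ pde qde.
have [aab bab] : `[a, b]%classic a /\ `[a, b]%classic b by rewrite /= !bound_itvE ltW.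
have inner_end x : `[a, b]%classic x -> d < x < e.
  move=> abx; apply: inner_of_inner_value.
    move: abx; rewrite /= in_itv /= => /andP[ax xb].
    by rewrite (le_trans dpq (le_trans pqa ax)) (le_trans xb (le_trans bpq pqe)).
  have : `[l, r]%classic (f x) by rewrite -fab; exists x.
  by rewrite /= in_itv /= => /andP[lfx fxr]; apply/andP; split; lra.
have /andP[da _] := inner_end a aab; have /andP[_ be] := inner_end b bab.
by exists (a, b).
Qed.

Lemma pullback_in_onto_component {x J} : U x ->
  f @` connected_component U x = `]d, e[%classic -> inner J ->
  exists S : R * R, [/\ 0 <= S.1, S.1 < S.2, S.2 <= 1,
    `[S.1, S.2]%classic `<=` connected_component U x &
    f @` `[S.1, S.2]%classic = `[J.1, J.2]%classic].
Proof.
set C := connected_component U x; case: J => l r Ux fC [/= dl lr re].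
have [p Cp fp] : (f @` C) l by rewrite fC /= in_itv /= dl (lt_trans lr re).
have [q Cq fq] : (f @` C) r by rewrite fC /= in_itv /= re (lt_trans dl lr).
have C01 : C `<=` `[0, 1]%classic by move=> z /connected_component_sub[].
have [a [b [pqa ab bpq fab _]]] :=
  exists_itv_onto lr (continuous_minmax _ _ (C01 _ Cp) (C01 _ Cq)) fp fq.
have abC : `[a, b]%classic `<=` C.
  have /connected_intervalP C_itv : connected C by exact: component_connected.
  have [Cmin Cmax] : C (minr p q) /\ C (maxr p q) by case: (leP p q).
  move=> z; rewrite /= in_itv /= => /andP[az zb].
  by apply: C_itv Cmin Cmax _ _; rewrite (le_trans pqa az) (le_trans zb bpq).
have [aab bab] : `[a, b]%classic a /\ `[a, b]%classic b by rewrite /= !bound_itvE ltW.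
have /C01/andP[a0 _] := abC a aab; have /C01/andP[_ b1] := abC b bab.
by exists (a, b).
Qed.

Section InnerChain.
Context {J : nat -> R * R}.
Hypotheses (J_inner : forall n, inner (J n))
  (fJ : forall n, f @` `[(J n.+1).1, (J n.+1).2]%classic = `[(J n).1, (J n).2]%classic).

Lemma inner_chain_tight : tight f J.
Proof.
split; [|split => //]; last by exists 0%N => n _; have [] := J_inner n.
move=> n; have [dl lr re] := J_inner n.
have J0 : 0 < (J n).1 by apply: le_lt_trans d0 dl.
rewrite (ltW J0) (ltW lr) (le_trans (ltW re) e1); do 3 split => //.
move=> J01; have : `[(J n).1, (J n).2]%classic 0 by rewrite J01 /= bound_itvE ler01.
by rewrite /= in_itv /= leNgt J0.
Qed.

Lemma inner_chain_sub n : `[(J n.+1).1, (J n.+1).2]%classic `<=` U.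
Proof.
have [dl _ re] := J_inner n.+1; have [dl' _ re'] := J_inner n.
move=> z Jz; split.
  apply: mem01_of_de; move: Jz; rewrite /= in_itv /= => /andP[? ?].
  by apply/andP; split; lra.
have : `[(J n).1, (J n).2]%classic (f z) by rewrite -fJ; exists z.
by rewrite /= !in_itv /= => /andP[? ?]; apply/andP; split; lra.
Qed.

End InnerChain.

Lemma two_onto_components_split {x1 x2} : U x1 -> U x2 ->
  f @` connected_component U x1 = `]d, e[%classic ->
  f @` connected_component U x2 = `]d, e[%classic ->
  connected_component U x1 <> connected_component U x2 ->
  admits_splitting_sequence f.
Proof.
move=> U1 U2 fC1 fC2 C12.
have J0 : inner ((2 * d + e) / 3, (d + 2 * e) / 3) by split => /=; move: (de); lra.
have [J J_inner fJ] := dependent_choice _ _ _ J0 pullback_inner.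
pose T n := J n.+1.
exists T; split; first exact: inner_chain_tight (fun n => J_inner n.+1) (fun n => fJ n.+1).
exists setT; split; first exact: infinite_nat.
have /choice[S hS] n : exists S : R * R, [/\ 0 <= S.1, S.1 < S.2, S.2 <= 1,
    `[S.1, S.2]%classic `&` `[(T n).1, (T n).2]%classic `<=` [set (T n).1; (T n).2]
  & f @` `[S.1, S.2]%classic = f @` `[(T n).1, (T n).2]%classic].
  have T_conn : connected `[(T n).1, (T n).2]%classic.
    exact/connected_intervalP/interval_is_interval.
  have [TC|TC] := connected_avoids_component T_conn (inner_chain_sub J_inner fJ n) C12;
    [have [S [S0 S12 S1 SC fS]] := pullback_in_onto_component U1 fC1 (J_inner n)
    |have [S [S0 S12 S1 SC fS]] := pullback_in_onto_component U2 fC2 (J_inner n)];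
    exists S; split; rewrite // ?fS ?fJ // => z [/SC Cz Tz];
    by suff : set0 z by []; rewrite -TC.
by exists S => n _; exact: hS.
Qed.

End OntoComponents.

Theorem lemma3p11 (R : realType) (f : R -> R)
  (f_cont : {within `[0, 1]%classic, continuous f})
  (f_maps : f @` `[0, 1]%classic `<=` `[0, 1]%classic)
  (f_nosplit : ~ admits_splitting_sequence f)
  (d e : R) (d0 : 0 <= d) (de : d < e) (e1 : e <= 1)
  (hde : (f d = d /\ f e = e) \/ (f d = e /\ f e = d)) :
  exists! C : set R,
    (exists2 x, (`[0, 1]%classic `&` f @^-1` `]d, e[%classic) x &
        C = connected_component (`[0, 1]%classic `&` f @^-1` `]d, e[%classic) x) /\
    f @` C = `]d, e[%classic.
Proof.
set U := `[0, 1]%classic `&` f @^-1` `]d, e[%classic.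
have [x Ux fCx] := onto_component_exists f_cont d0 de e1 hde.
exists (connected_component U x); split; first by split => //; exists x.
move=> _ [[y Uy ->] fCy]; apply: contrapT => Cxy.
exact: f_nosplit (two_onto_components_split f_cont d0 de e1 hde Ux Uy fCx fCy Cxy).
Qed.
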